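(* Let $\vec w=(w_1,\dots,w_n)\in[0,1]^n$ with $\sum_{i=1}^n w_i=1$. Then there is a distributive family $\Gamma=\{f_i:[0,1]^n\to[0,1]: i=1,\dots,n\}$ on $\langle [0,1], S_{LK}, T_P\rangle$ such that $DYOWA_\Gamma(\vec x)=OWA_{\vec w}(\vec x)$ for all $\vec x\in[0,1]^n$. That is, every Yager OWA function is a DYOWA function.
   Context: $T_P(x,y)=xy$ (product t-norm) and $S_{LK}(x,y)=\min(x+y,1)$ (Łukasiewicz t-conorm) on $[0,1]$; $n$-ary versions by left folding, e.g. $\bigoplus_{i=1}^n x_i=(\cdots((x_1\oplus x_2)\oplus x_3)\cdots)\oplus x_n$ with $\oplus=S_{LK}$, $\otimes=T_P$. Yager's OWA: $OWA_{\vec w}(x_1,\dots,x_n)=\sum_{i=1}^n w_i x_{(i)}$, where $(x_{(1)},\dots,x_{(n)})$ is the decreasing rearrangement of $(x_1,\dots,x_n)$. A finite family $\Gamma=\{f_i:L^n\to L\}$ is a weight function family on $\langle L,\oplus,\otimes\rangle$ if $\bigoplus_{i=1}^n f_i(\vec a)=\top_L$ for every $\vec a$; it is a distributive family if moreover $c\otimes\bigl(\bigoplus_{i=1}^n f_i(\vec a)\bigr)=\bigoplus_{i=1}^n (c\otimes f_i(\vec a))$ for all $c\in L$, $\vec a\in L^n$. The Lizasoain–Moreno function is $\mathscr{LM}(a_1,\dots,a_n)=(b_1,\dots,b_n)$ with $b_k=\bigvee_{\{j_1<\dots<j_k\}\subseteq\{1,\dots,n\}} a_{j_1}\wedge\cdots\wedge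 a_{j_k}$ (join over all $k$-element subsets). $DYOWA_\Gamma(\vec a)=\bigoplus_{i=1}^n \bigl(f_i(\vec a)\otimes b_i\bigr)$, where $(b_1,\dots,b_n)=\mathscr{LM}(\vec a)$. *)

(* the unit interval [0,1] of an arbitrary real field R
   (the paper's [0,1] is the case R = reals). *)
From HB Require Import structures.
From mathcomp Require Import all_boot all_order all_algebra.
Set Implicit Arguments. Unset Strict Implicit. Unset Printing Implicit Defensive.
Import Order.TTheory GRing.Theory Num.Theory.
Local Open Scope ring_scope.

Section Defs.
Variable R : realFieldType.

Definition in01 (x : R) : bool := (0 <= x) && (x <= 1).
(* a vector of [0,1]^n, indices 'I_n (i stands for i+1) *)
Definition in01v (n : nat) (a : 'I_n -> R) : Prop := forall i, in01 (a i).

Definition T_P (x y : R) : R := x * y.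
Definition S_LK (x y : R) : R := Num.min (x + y) 1.

(* n-ary version by left folding: (((x1 op x2) op x3) ... ) op xn;
   the (irrelevant) empty case is 0 *)
Definition lfold (op : R -> R -> R) (s : seq R) : R :=
  match s with [::] => 0 | x :: t => foldl op x t end.

Definition oplusn (n : nat) (g : 'I_n -> R) : R :=
  lfold S_LK [seq g i | i <- enum 'I_n].

Definition decr_rearr (n : nat) (x : 'I_n -> R) : seq R :=
  sort (fun a b : R => b <= a) [seq x i | i <- enum 'I_n].

Definition OWA (n : nat) (w x : 'I_n -> R) : R :=
  \sum_(i < n) w i * nth 0 (decr_rearr x) i.

Definition weight_function_family (n : nat) (f : 'I_n -> ('I_n -> R) -> R) : Prop :=
  (forall i a, in01v a -> in01 (f i a)) /\
  (forall a, in01v a -> oplusn (fun i => f i a) = 1).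

Definition distributive_family (n : nat) (f : 'I_n -> ('I_n -> R) -> R) : Prop :=
  weight_function_family f /\
  (forall c a, in01 c -> in01v a ->
     T_P c (oplusn (fun i => f i a)) = oplusn (fun i => T_P c (f i a))).

(* Lizasoain-Moreno function: b_k = join over k-subsets of the meet
   (component i : 'I_n corresponds to k = i+1); join/meet on [0,1] are max/min,
   with bottom 0 and top 1 *)
Definition LM (n : nat) (a : 'I_n -> R) (i : 'I_n) : R :=
  \big[Num.max/0]_(A : {set 'I_n} | #|A| == i.+1)
     \big[Num.min/1]_(j in A) a j.

Definition DYOWA (n : nat) (f : 'I_n -> ('I_n -> R) -> R) (a : 'I_n -> R) : R :=
  oplusn (fun i => T_P (f i a) (LM a i)).

End Defs.

(* With constant weights f_i := w_i the family is distributive because T_P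
   distributes over sums and, on nonnegative terms whose total is at most 1,
   the Lukasiewicz fold is just the sum. It then suffices that the k-th
   Lizasoain-Moreno component is the k-th largest entry: every (k+1)-subset
   meets the entries of rank >= k, and the k+1 largest entries attain it. *)
From HB Require Import structures.
From mathcomp Require Import all_boot all_order all_algebra.
Import Order.TTheory GRing.Theory Num.Theory.
Local Open Scope ring_scope.

Section LukasiewiczFold.
Variable R : realFieldType.

Lemma foldl_S_LK (s : seq R) (x : R) : 0 <= x -> all (>= 0) s ->
  x + \sum_(y <- s) y <= 1 -> foldl (@S_LK R) x s = x + \sum_(y <- s) y.
Proof.
elim: s x => [|y s IHs] x x0 /=; first by rewrite big_nil addr0.
case/andP=> y0 s0; rewrite big_cons addrA => le_1.
have xy_le1 : x + y <= 1.
  apply: le_trans le_1; rewrite lerDl big_seq sumr_ge0 // => z.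
  exact: (allP s0).
by rewrite /S_LK (min_l xy_le1) IHs // addr_ge0.
Qed.

Lemma lfold_S_LK (s : seq R) : all (>= 0) s ->
  \sum_(y <- s) y <= 1 -> lfold (@S_LK R) s = \sum_(y <- s) y.
Proof.
case: s => [|y s] /=; first by rewrite big_nil.
by case/andP=> y0 s0; rewrite big_cons; exact: foldl_S_LK.
Qed.

Lemma oplusn_sum n (g : 'I_n -> R) : (forall i, 0 <= g i) ->
  \sum_(i < n) g i <= 1 -> oplusn g = \sum_(i < n) g i.
Proof.
move=> g0; rewrite /oplusn -[\sum_(i < n) g i]big_enum -(big_map g xpredT id).
by apply: lfold_S_LK; apply/allP=> _ /mapP[i _ ->].
Qed.

End LukasiewiczFold.

Lemma exists_index_geq (T : finType) (s : seq T) (A : {set T}) k :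
  (forall j, j \in s) -> (k < #|A|)%N -> exists2 j, j \in A & (k <= index j s)%N.
Proof.
move=> sT kA; have/exists_inP[j jA kj] : [exists j in A, k <= index j s]%N.
  apply: contraTT kA => /exists_inPn idx_lt; rewrite -leqNgt.
  have sub : A \subset [set j in take k s].
    apply/subsetP=> j jA; rewrite inE.
    have jk : (index j s < k)%N by rewrite ltnNge idx_lt.
    by rewrite -(nth_index j (sT j)) -(nth_take j jk) mem_nth // size_take_min leq_min jk
      index_mem sT.
  apply: leq_trans (subset_leq_card sub) _.
  by rewrite cardsE (leq_trans (card_size _)) // size_take_min geq_minl.
by exists j.
Qed.

Section DecreasingEnumeration.
Variables (R : realFieldType) (n : nat) (x : 'I_n -> R).

Definition decr_enum : seq 'I_n := sort (fun i j => x j <= x i) (enum 'I_n).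

Lemma perm_decr_enum : perm_eq decr_enum (enum 'I_n).
Proof. by rewrite perm_sort. Qed.

Lemma decr_enum_uniq : uniq decr_enum.
Proof. by rewrite (perm_uniq perm_decr_enum) enum_uniq. Qed.

Lemma size_decr_enum : size decr_enum = n.
Proof. by rewrite (perm_size perm_decr_enum) size_enum_ord. Qed.

Lemma mem_decr_enum j : j \in decr_enum.
Proof. by rewrite (perm_mem perm_decr_enum) mem_enum. Qed.

Lemma nth_decr_rearr j0 (k : 'I_n) :
  nth 0 (decr_rearr x) k = x (nth j0 decr_enum k).
Proof. by rewrite /decr_rearr sort_map (nth_map j0) // size_decr_enum. Qed.

Lemma nth_decr_enum_le j0 {i j} : (i <= j)%N -> (j < n)%N ->
  x (nth j0 decr_enum j) <= x (nth j0 decr_enum i).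
Proof.
move=> ij jn; apply: (sorted_leq_nth (leT := fun i j => x j <= x i)).
- by move=> a b c ba cb; exact: le_trans cb ba.
- by move=> a; exact: lexx.
- by apply: sort_sorted => a b; exact: le_total.
- by rewrite inE size_decr_enum (leq_ltn_trans ij).
- by rewrite inE size_decr_enum.
- exact: ij.
Qed.

Lemma index_decr_enum_lt j : (index j decr_enum < n)%N.
Proof. by rewrite -[X in (_ < X)%N]size_decr_enum index_mem mem_decr_enum. Qed.

Lemma nth_decr_enum_le_index j0 j (k : 'I_n) : (index j decr_enum <= k)%N ->
  x (nth j0 decr_enum k) <= x j.
Proof.
move=> jk; rewrite -[x j](congr1 x (nth_index j0 (mem_decr_enum j))).
exact: nth_decr_enum_le jk (ltn_ord k).
Qed.

Lemma nth_decr_enum_ge_index j0 j k : (k <= index j decr_enum)%N ->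
  x j <= x (nth j0 decr_enum k).
Proof.
move=> kj; rewrite -[x j](congr1 x (nth_index j0 (mem_decr_enum j))).
exact: nth_decr_enum_le kj (index_decr_enum_lt j).
Qed.

Lemma LM_decr_enum (k : 'I_n) : in01v x -> LM x k = x (nth k decr_enum k).
Proof.
move=> x01; set v := x (nth k decr_enum k).
have /andP[v0 v1] := x01 (nth k decr_enum k).
apply/eqP; rewrite eq_le; apply/andP; split.
- rewrite /LM; apply: (big_ind (fun y => y <= v)) => // [a b av bv|A /eqP cardA].
    by rewrite ge_max av.
  have [|j jA kj] := @exists_index_geq _ _ A k mem_decr_enum; first by rewrite cardA.
  by rewrite (bigD1 j) //= ge_min nth_decr_enum_ge_index.
- pose top := [set j in take k.+1 decr_enum].
  have cardT : #|top| == k.+1.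
    by rewrite cardsE (card_uniqP _) ?take_uniq ?decr_enum_uniq // size_takel
      ?size_decr_enum.
  rewrite /LM (bigD1 top) //= le_max; apply/orP; left.
  apply: (big_ind (fun y => v <= y)) => // [a b va vb|j]; first by rewrite le_min va.
  rewrite inE => jtop; apply: nth_decr_enum_le_index.
  by rewrite -ltnS index_ltn.
Qed.

End DecreasingEnumeration.

Section ConstantWeights.
Variables (R : realFieldType) (n : nat) (w : 'I_n -> R).
Hypotheses (w01 : in01v w) (sum_w : \sum_(i < n) w i = 1).

Let w_ge0 i : 0 <= w i. Proof. by case/andP: (w01 i). Qed.

Lemma oplusn_weighted (c : 'I_n -> R) : (forall i, in01 (c i)) ->
  oplusn (fun i => w i * c i) = \sum_(i < n) w i * c i.
Proof.
move=> c01; have c_ge0 i : 0 <= c i by case/andP: (c01 i).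
apply: oplusn_sum => [i|]; first exact: mulr_ge0.
rewrite -sum_w; apply: ler_sum => i _; rewrite ler_piMr //.
by case/andP: (c01 i).
Qed.

Lemma distributive_const_family : distributive_family (fun i (_ : 'I_n -> R) => w i).
Proof.
have oplus_w : oplusn w = 1 by rewrite oplusn_sum // sum_w.
split; first by split=> // a _; rewrite oplus_w.
move=> c a /andP[c0 c1] _; rewrite /T_P /= oplus_w mulr1.
by rewrite oplusn_sum => [|i|]; rewrite ?mulr_ge0 // -mulr_sumr sum_w mulr1.
Qed.

Lemma DYOWA_const_family x : in01v x ->
  DYOWA (fun i (_ : 'I_n -> R) => w i) x = OWA w x.
Proof.
move=> x01; rewrite /DYOWA /T_P oplusn_weighted => [|i]; last by rewrite LM_decr_enum.
by apply: eq_bigr => i _; rewrite LM_decr_enum // (nth_decr_rearr _ _ _ i).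
Qed.

End ConstantWeights.

Theorem corollary1 (R : realFieldType) (n : nat) (w : 'I_n -> R)
  (hw : in01v w) (hsum : \sum_(i < n) w i = 1) :
  exists f : 'I_n -> ('I_n -> R) -> R,
    distributive_family f /\
    (forall x : 'I_n -> R, in01v x -> DYOWA f x = OWA w x).
Proof.
exists (fun i _ => w i); split; first exact: distributive_const_family.
exact: DYOWA_const_family.
Qed.
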